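(* Let $G=(V,E)$ be a finite simple undirected graph and let $W\subseteq V$, $|W|\ge 2$, be a clique of $G$. Then \[ F_W:=\{x\in STAB(G)\mid x_W=1\}\subseteq STAB(G\mid W)\subseteq STAB(G). \]
   Context: For a graph $G=(V,E)$, $\mathcal S(G)\subseteq\{0,1\}^V$ is the set of characteristic vectors of stable sets of $G$, and $STAB(G)=\mathrm{conv}\,\mathcal S(G)$. For $W\subseteq V$ and $x\in\mathbb R^V$, $x_W=\sum_{v\in W}x_v$. $N(v)$ denotes the neighborhood of $v$ in $G$. The clique projection of a clique $W$ ($|W|\ge 2$) is the graph $G\mid W=(V,E\mid W)$ with $E\mid W=E\cup\{uv\notin E \mid u\neq v,\ W\subseteq N(u)\cup N(v)\}$. *)

From HB Require Import structures.
From mathcomp Require Import all_boot all_order all_algebra.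
Set Implicit Arguments. Unset Strict Implicit. Unset Printing Implicit Defensive.
Import Order.TTheory GRing.Theory Num.Theory.
Local Open Scope ring_scope.

Definition simple_graph (T : finType) (e : rel T) : Prop :=
  symmetric e /\ irreflexive e.

Definition nbhd (T : finType) (e : rel T) (v : T) : {set T} := [set w | e v w].

Definition stable (T : finType) (e : rel T) (S : {set T}) : bool :=
  [forall u in S, forall v in S, ~~ e u v].

Definition is_clique (T : finType) (e : rel T) (W : {set T}) : bool :=
  [forall u in W, forall v in W, (u != v) ==> e u v].

Definition chi (R : nzRingType) (T : finType) (S : {set T}) : T -> R :=
  fun v => (v \in S)%:R.

Definition stab_vecs (R : nzRingType) (T : finType) (e : rel T) (x : T -> R) : Prop :=
  exists S : {set T}, stable e S /\ x = chi R S.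

Definition conv (R : realFieldType) (T : finType) (P : (T -> R) -> Prop)
    (x : T -> R) : Prop :=
  exists (n : nat) (p : 'I_n -> T -> R) (l : 'I_n -> R),
    [/\ forall i, P (p i),
        forall i, 0 <= l i,
        \sum_(i < n) l i = 1
      & forall v, x v = \sum_(i < n) l i * p i v].

Definition STAB (R : realFieldType) (T : finType) (e : rel T) : (T -> R) -> Prop :=
  conv (stab_vecs e).

Definition xsum (R : nzRingType) (T : finType) (x : T -> R) (W : {set T}) : R :=
  \sum_(v in W) x v.

Definition clique_proj (T : finType) (e : rel T) (W : {set T}) : rel T :=
  fun u v => e u v || ((u != v) && (W \subset nbhd e u :|: nbhd e v)).

(** A stable set S of G meets the clique W in at most one vertex, so x_W <= 1 on
    STAB(G); if x_W = 1 for a convex combination of such vectors, every stable set of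
    positive weight has |S ∩ W| = 1. Such an S is still stable in G|W: for u, v in S,
    the vertex w of S ∩ W is adjacent to neither, so W is not covered by N(u) ∪ N(v).
    Conversely G|W has more edges than G, so its stable sets are stable in G. *)
From mathcomp Require Import all_boot all_order all_algebra.
Set Implicit Arguments. Unset Strict Implicit. Unset Printing Implicit Defensive.
Import Order.TTheory GRing.Theory Num.Theory.
Local Open Scope ring_scope.

Section ConvexHull.

Variables (R : realFieldType) (T : finType).
Implicit Types (P Q : (T -> R) -> Prop) (x : T -> R) (W : {set T}).

Lemma conv_sub P Q x : (forall p, P p -> Q p) -> conv P x -> conv Q x.
Proof.
move=> PQ [n [p [l [Pp l0 l1 xE]]]].
by exists n, p, l; split=> // i; apply: PQ.
Qed.

Lemma xsum_conv n (l : 'I_n -> R) (p : 'I_n -> T -> R) W :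
  xsum (fun v => \sum_(i < n) l i * p i v) W = \sum_(i < n) l i * xsum (p i) W.
Proof.
rewrite /xsum exchange_big /=.
by apply: eq_bigr => i _; rewrite mulr_sumr.
Qed.

Lemma conv_face P W x :
  (forall p, P p -> xsum p W <= 1) -> conv P x -> xsum x W = 1 ->
  conv (fun p => P p /\ xsum p W = 1) x.
Proof.
move=> P_le1 [n [p [l [Pp l0 l1 xE]]]] xW.
have slack_ge0 i : 0 <= l i * (1 - xsum (p i) W).
  by rewrite mulr_ge0 // subr_ge0 P_le1.
have slack0 : \sum_(i < n) l i * (1 - xsum (p i) W) = 0.
  under eq_bigr do rewrite mulrBr mulr1.
  rewrite sumrB l1 -xsum_conv -xW.
  by rewrite [xsum x W](eq_bigr _ (fun v _ => xE v)) subrr.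
have face i : l i != 0 -> xsum (p i) W = 1.
  move=> li0; have /eqP := psumr_eq0P (fun i _ => slack_ge0 i) slack0 (i:=i) isT.
  by rewrite mulf_eq0 (negbTE li0) subr_eq0 => /eqP.
have [j0 lj0] : exists j, l j != 0.
  case: (pickP (fun j => l j != 0)) => [j lj0 | all0]; first by exists j.
  move: l1; rewrite big1 => [/eqP|i _]; first by rewrite eq_sym oner_eq0.
  by apply/eqP; rewrite -[_ == _]negbK all0.
(* Points of zero weight may lie off the face; swap them for a point on it. *)
exists n, (fun i => if l i == 0 then p j0 else p i), l; split=> //.
- by move=> i; case: eqP => [_ | /eqP li0]; split;
    [exact: Pp | exact: face lj0 | exact: Pp | exact: face li0].
- move=> v; rewrite xE; apply: eq_bigr => i _.
  by case: eqP => // ->; rewrite !mul0r.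
Qed.

End ConvexHull.

Section StableSets.

Variables (T : finType) (e : rel T).
Implicit Types (S W : {set T}).

Lemma stable_subrel (e' : rel T) S : subrel e' e -> stable e S -> stable e' S.
Proof.
move=> e'e /forall_inP sS; apply/forall_inP => u uS; apply/forall_inP => v vS.
by have /forall_inP/(_ v vS) := sS u uS; apply: contra; apply: e'e.
Qed.

Lemma stable_clique_le1 S W :
  stable e S -> is_clique e W -> (#|W :&: S| <= 1)%N.
Proof.
move=> /forall_inP sS /forall_inP cW; apply/card_le1_eqP => u v.
rewrite !inE => /andP[uW uS] /andP[vW vS]; apply/eqP/contraT; rewrite eq_sym => uv.
have /forall_inP/(_ v vW) := cW u uW; rewrite uv /= => euv.
by have /forall_inP/(_ v vS) := sS u uS; rewrite euv.
Qed.

Lemma stable_clique_proj S W w :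
  w \in W -> w \in S -> stable e S -> stable (clique_proj e W) S.
Proof.
move=> wW wS /forall_inP sS; apply/forall_inP => u uS; apply/forall_inP => v vS.
have /forall_inP sSu := sS u uS; have /forall_inP sSv := sS v vS.
rewrite /clique_proj negb_or sSu //=; apply/negP => /andP[_ /subsetP/(_ w wW)].
by rewrite !inE => /orP[]; apply/negP; [apply: sSu | apply: sSv].
Qed.

End StableSets.

Section StableVectors.

Variables (R : realFieldType) (T : finType) (e : rel T).
Implicit Types (p : T -> R) (S W : {set T}).

Lemma xsum_chi S W : xsum (chi R S) W = #|W :&: S|%:R.
Proof.
rewrite /xsum /chi -sum1_card natr_sum big_mkcond [RHS]big_mkcond /=.
by apply: eq_bigr => v _; rewrite inE; case: (v \in W); case: (v \in S).
Qed.

Lemma stab_vecs_subrel (e' : rel T) p :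
  subrel e' e -> stab_vecs e p -> stab_vecs e' p.
Proof. by move=> e'e [S [sS ->]]; exists S; split; first exact: stable_subrel sS. Qed.

Lemma stab_vecs_xsum_le1 W p : is_clique e W -> stab_vecs e p -> xsum p W <= 1.
Proof.
move=> cW [S [sS ->]].
by rewrite xsum_chi -[1]/(1%:R) ler_nat (stable_clique_le1 sS cW).
Qed.

Lemma stab_vecs_clique_proj W p :
  stab_vecs e p -> xsum p W = 1 -> stab_vecs (clique_proj e W) p.
Proof.
move=> [S [sS ->]]; rewrite xsum_chi => WS1.
have /card_gt0P[w] : (0 < #|W :&: S|)%N by rewrite lt0n -(eqr_nat R) WS1 oner_eq0.
rewrite inE => /andP[wW wS].
by exists S; split; first exact: stable_clique_proj wW wS sS.
Qed.

End StableVectors.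

Theorem lemma1 (R : realFieldType) (T : finType) (e : rel T) (W : {set T}) :
  simple_graph e -> is_clique e W -> (2 <= #|W|)%N ->
  (forall x : T -> R, STAB e x -> xsum x W = 1 -> STAB (clique_proj e W) x) /\
  (forall x : T -> R, STAB (clique_proj e W) x -> STAB e x).
Proof.
move=> _ cW _; split=> [x stab_x xW | x].
- apply: conv_sub (conv_face (fun p => stab_vecs_xsum_le1 cW) stab_x xW).
  by move=> p [stab_p pW]; exact: stab_vecs_clique_proj.
- apply: conv_sub => p; apply: stab_vecs_subrel => u v euv.
  by rewrite /clique_proj euv.
Qed.
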